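(* Let $p,q\ge1$, $N\ge1$, and let $\mu$ be a $q\times p$ matrix of measures. Assume that $\mathscr M_N$, $\mathscr M_{N,(b,0)}$ ($b\in\{1,\dots,q\}$) and $\mathscr M_{N,(0,a)}$ ($a\in\{1,\dots,p\}$) admit Gauss--Borel factorizations $\mathscr M_{N,(n,m)}=\mathscr L_{N,(n,m)}^{-1}\mathscr U_{N,(n,m)}^{-1}$ with lower unitriangular $\mathscr L_{N,(n,m)}$, and let $U_b:=\mathscr U_{N,(b,0)}^{-1}\mathscr U_{N,(b-1,0)}$, $L_a:=\mathscr L_{N,(0,a-1)}\mathscr L_{N,(0,a)}^{-1}$ (so that $\mathscr T_N=L_1\cdots L_pU_q\cdots U_1$). Write $U_{b,n}:=(U_b)_{n,n}$ and $L_{a,n}:=(L_a)_{n,n-1}$. Then \[U_{b,n}=-\frac{\tau^B_{b-1,n}\,\tau^B_{b,n+1}}{\tau^B_{b-1,n+1}\,\tau^B_{b,n}},\qquad b\in\{1,\dots,q\},\ n\in\{0,1,\dots,N-b-1\},\] \[L_{a,n+1}=-\frac{\tau^A_{a-1,n+2}\,\tau^A_{a,n}}{\tau^A_{a-1,n+1}\,\tau^A_{a,n+1}},\qquad a\in\{1,\dots,p\},\ n\in\{0,1,\dots,N-a-1\}.\]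
   Context: All matrices are indexed from $0$. Fix integers $p,q\ge1$ and a $q\times p$ matrix $\mu$ of real measures on $\mathbb R$ with finite moments. For $r,n\ge1$, $X^{[n]}_{[r]}(x)$ is the $n\times r$ matrix whose row $k$ is $x^{\lfloor k/r\rfloor}e_{k\bmod r}^\top$ ($e_0,\dots,e_{r-1}$ standard basis of $\mathbb R^r$). Moment matrices: $\mathscr M^{[n,m]}=\int X^{[n]}_{[q]}\,\mathrm d\mu\,(X^{[m]}_{[p]})^\top$, $\mathscr M_n=\mathscr M^{[n,n]}$. Gauss--Borel factorization: $\mathscr M_N=\mathscr L_N^{-1}\mathscr U_N^{-1}$, $\mathscr L_N$ lower unitriangular, $\mathscr U_N$ nonsingular upper triangular. The polynomial matrices are $B^{[N]}(x):=\mathscr L_NX^{[N]}_{[q]}(x)$ ($N\times q$, entry in row $n$ and column $j$ denoted $B^{(j)}_n(x)$, $j=1,\dots,q$) and $A^{[N]}(x):=(X^{[N]}_{[p]}(x))^\top\mathscr U_N$ ($p\times N$, entry in row $i$ and column $n$ denoted $A^{(i)}_n(x)$, $i=1,\dots,p$). $\Lambda^{[n,n+r]}_{[r]}$ is the $n\times(n+r)$ matrix with entries $\delta_{j,i+r}$, and $\mathscr T_N:=\mathscr L_N\Lambda^{[N,N+q]}_{[q]}\mathscr M^{[N+q,N]}\mathscr U_N$. $\mathfrak X_{[r,1]}(x)$ is the $r\times r$ matrix with $(\mathfrak X_{[r,1]})_{i,i+1}=1$ ($0\le i\le r-2$), $(\mathfrak X_{[r,1]})_{r-1,0}=x$, other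 entries $0$; $\mathrm d\mu_{(n,m)}:=\mathfrak X_{[q,1]}^n\,\mathrm d\mu\,(\mathfrak X_{[p,1]}^m)^\top$ with moment matrices $\mathscr M_{N,(n,m)}$ defined as for $\mu$. The $\tau$-determinants are \[\tau^B_{b,n}:=\det\big(B^{(j)}_{n+i}(0)\big)_{0\le i\le b-1,\ 1\le j\le b},\qquad \tau^A_{a,n}:=\det\big(A^{(i)}_{n+a-k}(0)\big)_{1\le i\le a,\ 1\le k\le a},\] (so the row $i$ of the matrix defining $\tau^A_{a,n}$ is $(A^{(i)}_{n+a-1}(0),\dots,A^{(i)}_n(0))$), and $\tau^A_{0,n}=\tau^B_{0,n}=1$. *)

From HB Require Import structures.
From mathcomp Require Import all_boot all_order all_algebra.
From mathcomp Require Import all_classical all_reals all_analysis.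
Set Implicit Arguments. Unset Strict Implicit. Unset Printing Implicit Defensive.
Import Order.TTheory GRing.Theory Num.Theory.
Import numFieldNormedType.Exports.
Local Open Scope classical_set_scope.
Local Open Scope ring_scope.

Section Defs.
Variable R : realType.

Definition mxn (T : Type) (x0 : T) (m n : nat) (A : 'M[T]_(m, n)) (i j : nat) : T :=
  match @insub nat (fun k => k < m)%N 'I_m i, @insub nat (fun k => k < n)%N 'I_n j with
  | Some i', Some j' => A i' j'
  | _, _ => x0
  end.

Definition Xmx (n r : nat) : 'M[{poly R}]_(n, r) :=
  \matrix_(k < n, j < r) (if (j == (k %% r)%N :> nat) then 'X^(k %/ r)%N else 0).

Definition frakX (r : nat) : 'M[{poly R}]_r :=
  \matrix_(i < r, j < r)
    (if (j == i.+1 :> nat) then 1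
     else if (i == r.-1 :> nat) && (j == 0 :> nat) then 'X else 0).

Definition mxpow (r : nat) (M : 'M[{poly R}]_r) (n : nat) : 'M[{poly R}]_r :=
  iter n (mulmx M) 1%:M.

(* a real measure is represented as mu_pos - mu_neg (Jordan-type decomposition);
   integral of a polynomial f against the (a,b) entry of the matrix of measures *)
Definition Ipoly (p q : nat) (mu_pos mu_neg : 'I_q -> 'I_p -> {measure set R -> \bar R})
  (a : 'I_q) (b : 'I_p) (f : {poly R}) : R :=
  Rintegral (mu_pos a b) setT (fun x => f.[x]) - Rintegral (mu_neg a b) setT (fun x => f.[x]).

Definition finite_moments (p q : nat) (mu_pos mu_neg : 'I_q -> 'I_p -> {measure set R -> \bar R}) :=
  forall (a : 'I_q) (b : 'I_p) (k : nat),
    (mu_pos a b).-integrable setT (fun x => (x ^+ k)%:E) /\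
    (mu_neg a b).-integrable setT (fun x => (x ^+ k)%:E).

(* integration functional of d mu_{(n,m)} = frakX_q^n d mu (frakX_p^m)^T *)
Definition Ishift (p q : nat) (I : 'I_q -> 'I_p -> {poly R} -> R) (n m : nat)
  (i : 'I_q) (j : 'I_p) (f : {poly R}) : R :=
  \sum_(c < q) \sum_(d < p) I c d (f * mxpow (frakX q) n i c * mxpow (frakX p) m j d).

Definition mom_mx (p q : nat) (I : 'I_q -> 'I_p -> {poly R} -> R) (n m : nat) : 'M[R]_(n, m) :=
  \matrix_(k < n, l < m) \sum_(a < q) \sum_(b < p) I a b (Xmx n q k a * Xmx m p l b).

Definition GB_fact (n : nat) (M L U : 'M[R]_n) : Prop :=
  [/\ (forall i j : 'I_n, (i < j)%N -> L i j = 0),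
      (forall i : 'I_n, L i i = 1),
      (forall i j : 'I_n, (j < i)%N -> U i j = 0),
      U \in unitmx &
      M = invmx L *m invmx U].

Definition Bpoly (N q : nat) (L : 'M[R]_N) : 'M[{poly R}]_(N, q) :=
  map_mx polyC L *m Xmx N q.
Definition Apoly (N p : nat) (U : 'M[R]_N) : 'M[{poly R}]_(p, N) :=
  (Xmx N p)^T *m map_mx polyC U.

(* tau^B_{b,n} = det (B^{(j)}_{n+i}(0))_{0<=i<=b-1, 1<=j<=b}  (column j-1 of B) *)
Definition tauB (N q : nat) (L : 'M[R]_N) (b n : nat) : R :=
  \det (\matrix_(i < b, j < b) (mxn 0 (Bpoly q L) (n + i) j).[0]).

(* tau^A_{a,n} = det (A^{(i)}_{n+a-k}(0))_{1<=i<=a, 1<=k<=a}  (row i-1 of A) *)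
Definition tauA (N p : nat) (U : 'M[R]_N) (a n : nat) : R :=
  \det (\matrix_(i < a, k < a) (mxn 0 (Apoly p U) i ((n + a).-1 - k)).[0]).

End Defs.

(* The tau-determinants are minors of the Gauss--Borel factors of the moment
   matrix M = L^-1 U^-1: tau^B_{b,n} is a b x b block of L, and tau^A_{a,n} is,
   up to the sign of a column reversal, an a x a block of U.  Bordering M with
   unit rows turns these blocks into minors of M (a Jacobi-type identity): the
   n x n minor of M on the rows b, ..., b+n-1 is +-tau^B_{b,n} times the leading
   n x n minor of M, and dually for columns and tau^A.  Multiplying the measure
   by frakX^b on the left (frakX^a on the right) shifts the rows (columns) of
   the moment matrix by b (a), so those minors are leading minors of shifted
   moment matrices, i.e. products of diagonal entries of the inverses of their
   upper factors.  Hence consecutive tau's differ by ratios of such diagonal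
   entries, and the diagonal of U_b and the subdiagonal of L_a are ratios of
   exactly this kind. *)

From HB Require Import structures.
From mathcomp Require Import all_boot all_order all_algebra.
From mathcomp Require Import all_classical all_reals all_analysis.
From mathcomp Require Import perm zify ring.
Set Implicit Arguments. Unset Strict Implicit. Unset Printing Implicit Defensive.
Import Order.TTheory GRing.Theory Num.Theory.
Local Open Scope ring_scope.

Section NatIndexedEntries.
Variable T : Type.

Lemma mxnE (x0 : T) m n (A : 'M[T]_(m, n)) i j (lt_im : (i < m)%N) (lt_jn : (j < n)%N) :
  mxn x0 A i j = A (Ordinal lt_im) (Ordinal lt_jn).
Proof.
rewrite /mxn; case: insubP => [i' _ i'i|]; last by rewrite lt_im.
case: insubP => [j' _ j'j|]; last by rewrite lt_jn.
by congr (A _ _); apply: val_inj.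
Qed.

Lemma mxn_ord (x0 : T) m n (A : 'M[T]_(m, n)) (i : 'I_m) (j : 'I_n) : mxn x0 A i j = A i j.
Proof. by rewrite (mxnE _ _ (ltn_ord i) (ltn_ord j)); congr (A _ _); apply: val_inj. Qed.

Lemma mxn_out (x0 : T) m n (A : 'M[T]_(m, n)) i j :
  ~~ ((i < m) && (j < n))%N -> mxn x0 A i j = x0.
Proof.
rewrite /mxn negb_and => out_ij.
case: insubP => [i' lt_im _|] //; case: insubP => [j' lt_jn _|] //.
by rewrite lt_im lt_jn in out_ij.
Qed.

Lemma mxn_tr (x0 : T) m n (A : 'M[T]_(m, n)) i j : mxn x0 A^T i j = mxn x0 A j i.
Proof.
have [/andP[lt_in lt_jm]|out_ij] := boolP ((i < n) && (j < m))%N.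
  by rewrite !mxnE mxE.
by rewrite !mxn_out // andbC.
Qed.

Definition sqmx k (f : nat -> nat -> T) : 'M[T]_k := \matrix_(i < k, j < k) f i j.

Lemma eq_sqmx k (f g : nat -> nat -> T) :
  (forall i j, (i < k)%N -> (j < k)%N -> f i j = g i j) -> sqmx k f = sqmx k g.
Proof. by move=> eq_fg; apply/matrixP => i j; rewrite !mxE eq_fg. Qed.

Lemma sqmx_minor k f (i0 j0 : 'I_k.+1) :
  row' i0 (col' j0 (sqmx k.+1 f)) = sqmx k (fun i j => f (bump i0 i) (bump j0 j)).
Proof. by apply/matrixP => i j; rewrite !mxE. Qed.

End NatIndexedEntries.

Section RingEntries.
Variable R : pzSemiRingType.

Lemma mxn_mul m n k (A : 'M[R]_(m, n)) (B : 'M[R]_(n, k)) i j :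
  mxn 0 (A *m B) i j = \sum_(l < n) mxn 0 A i l * mxn 0 B l j.
Proof.
have [/andP[lt_im lt_jk]|out_ij] := boolP ((i < m) && (j < k))%N.
  by rewrite mxnE mxE; apply: eq_bigr => l _; rewrite -(mxn_ord 0 A) -(mxn_ord 0 B).
rewrite mxn_out // big1 // => l _; move: out_ij; rewrite negb_and => /orP[] out.
  by rewrite (mxn_out 0 A) ?mul0r // (negPf out).
by rewrite (mxn_out 0 B) ?mulr0 // (negPf out) andbF.
Qed.

Lemma mxn1 n i j : (i < n)%N -> (j < n)%N -> mxn 0 (1%:M : 'M[R]_n) i j = (i == j)%:R.
Proof. by move=> lt_in lt_jn; rewrite mxnE mxE. Qed.

Lemma mxn_trig m n (A : 'M[R]_(m, n)) i j : is_trig_mx A -> (i < j)%N -> mxn 0 A i j = 0.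
Proof.
move=> /is_trig_mxP A_trig lt_ij.
have [/andP[lt_im lt_jn]|out_ij] := boolP ((i < m) && (j < n))%N.
  by rewrite mxnE A_trig.
exact: mxn_out.
Qed.

Lemma mxn_trig_tr m n (A : 'M[R]_(m, n)) i j : is_trig_mx A^T -> (j < i)%N -> mxn 0 A i j = 0.
Proof. by move=> A_trig lt_ji; rewrite -mxn_tr mxn_trig. Qed.

Lemma sum_ord_trunc n k (F : nat -> R) : (k <= n)%N ->
  (forall l, (k <= l < n)%N -> F l = 0) -> \sum_(l < n) F l = \sum_(l < k) F l.
Proof.
move=> le_kn F0; symmetry; rewrite (big_ord_widen n F le_kn) big_rmcond // => l.
by rewrite -leqNgt => le_kl; apply/F0/andP.
Qed.

Lemma mxn_mul_trig n (A B : 'M[R]_n) k i j : is_trig_mx A -> (i < k <= n)%N ->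
  mxn 0 (A *m B) i j = \sum_(l < k) mxn 0 A i l * mxn 0 B l j.
Proof.
move=> A_trig /andP[lt_ik le_kn].
rewrite mxn_mul (sum_ord_trunc (F := fun l => mxn 0 A i l * mxn 0 B l j) le_kn) // => l.
by case/andP=> le_kl _; rewrite (mxn_trig A_trig) ?mul0r //; exact: leq_trans lt_ik le_kl.
Qed.

Lemma mxn_mul_trig_tr n (A B : 'M[R]_n) k i j : is_trig_mx B^T -> (j < k <= n)%N ->
  mxn 0 (A *m B) i j = \sum_(l < k) mxn 0 A i l * mxn 0 B l j.
Proof.
move=> B_trig /andP[lt_jk le_kn].
rewrite mxn_mul (sum_ord_trunc (F := fun l => mxn 0 A i l * mxn 0 B l j) le_kn) // => l.
by case/andP=> le_kl _; rewrite (mxn_trig_tr B_trig) ?mulr0 //; exact: leq_trans lt_jk le_kl.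
Qed.

Lemma mxn_mul_diag_trig n (A B : 'M[R]_n) i : is_trig_mx A -> is_trig_mx B ->
  mxn 0 (A *m B) i i = mxn 0 A i i * mxn 0 B i i.
Proof.
move=> A_trig B_trig; have [lt_in|le_ni] := ltnP i n; last first.
  by rewrite !mxn_out ?mul0r // andbb -leqNgt.
rewrite (mxn_mul_trig _ _ A_trig (k := i.+1)) ?ltnSn // big_ord_recr /= big1 ?add0r //.
by move=> l _; rewrite (mxn_trig B_trig) ?mulr0.
Qed.

Lemma sqmx_mul k (f g : nat -> nat -> R) :
  sqmx k f *m sqmx k g = sqmx k (fun i j => \sum_(l < k) f i l * g l j).
Proof. by apply/matrixP => i j; rewrite !mxE; apply: eq_bigr => l _; rewrite !mxE. Qed.

End RingEntries.

Section ComRingMatrices.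
Variable R : comPzRingType.

Lemma mxn_mul_diag_trig_tr n (A B : 'M[R]_n) i : is_trig_mx A^T -> is_trig_mx B^T ->
  mxn 0 (A *m B) i i = mxn 0 A i i * mxn 0 B i i.
Proof.
by move=> A_trig B_trig; rewrite -mxn_tr trmx_mul mxn_mul_diag_trig // !mxn_tr mulrC.
Qed.

Lemma det_sqmx_lower k f : (forall i j, (i < j < k)%N -> f i j = 0) ->
  \det (sqmx k f) = \prod_(i < k) f i i :> R.
Proof.
move=> f_trig; rewrite det_trig; last first.
  by apply/is_trig_mxP => i j lt_ij; rewrite mxE f_trig // lt_ij ltn_ord.
by apply: eq_bigr => i _; rewrite mxE.
Qed.

Lemma det_sqmx_upper k f : (forall i j, (j < i < k)%N -> f i j = 0) ->
  \det (sqmx k f) = \prod_(i < k) f i i :> R.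
Proof.
move=> f_trig; rewrite -det_tr.
have -> : (sqmx k f)^T = sqmx k (fun i j => f j i) by apply/matrixP => i j; rewrite !mxE.
by apply: det_sqmx_lower => i j; apply: f_trig.
Qed.

Lemma det_sqmx_ublock n b h : (forall i j, (i < b)%N -> (j < n)%N -> h (n + i)%N j = 0) ->
  \det (sqmx (n + b) h) = \det (sqmx n h) * \det (sqmx b (fun i j => h (n + i)%N (n + j)%N)) :> R.
Proof.
move=> h0; rewrite -(det_ublock _ (\matrix_(i < n, j < b) h i (n + j)%N)); congr (\det _).
apply/matrixP => i j; rewrite -(splitK i) -(splitK j).
case: (fintype.split i) => i'; case: (fintype.split j) => j';
by rewrite ?(block_mxEul, block_mxEur, block_mxEdl, block_mxEdr) !mxE //= h0.
Qed.

Lemma det_sqmx_lblock n b h : (forall i j, (i < n)%N -> (j < b)%N -> h i (n + j)%N = 0) ->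
  \det (sqmx (n + b) h) = \det (sqmx n h) * \det (sqmx b (fun i j => h (n + i)%N (n + j)%N)) :> R.
Proof.
move=> h0; rewrite -(det_lblock _ (\matrix_(i < b, j < n) h (n + i)%N j)); congr (\det _).
apply/matrixP => i j; rewrite -(splitK i) -(splitK j).
case: (fintype.split i) => i'; case: (fintype.split j) => j';
by rewrite ?(block_mxEul, block_mxEur, block_mxEdl, block_mxEdr) !mxE //= h0.
Qed.

Lemma det_sqmx_top_unit_rows b n g : (forall i j, (i < n)%N -> g i j = (j == b + i)%N%:R) ->
  \det (sqmx (n + b) g) = (-1) ^+ (n * b) * \det (sqmx b (fun i j => g (n + i)%N j)) :> R.
Proof.
elim: n g => [|n IHn] g g_unit; first by rewrite mul0n expr0 mul1r.
have lt_b : (b < n.+1 + b)%N by lia.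
rewrite (expand_det_row _ ord0) (big_only1 (Ordinal lt_b)) //; last first.
  by move=> j nej _; rewrite mxE g_unit // addn0 (negPf (nej : j != b :> nat)) mul0r.
rewrite mxE g_unit // addn0 eqxx mul1r /cofactor sqmx_minor /=.
rewrite IHn => [|i j lt_in]; last first.
  by rewrite g_unit // /bump; congr (_%:R); apply/eqP/eqP; case: leqP; lia.
rewrite mulrA -exprD mulSn; congr (_ * \det _); apply: eq_sqmx => i j _ lt_jb.
by rewrite /bump (leqNgt b j) lt_jb.
Qed.

Lemma det_sqmx_bottom_unit_rows n c g : (forall r j, (r < c)%N -> g (n + r)%N j = (j == r)%:R) ->
  \det (sqmx (c + n) g) = (-1) ^+ (n * c) * \det (sqmx n (fun i j => g i (c + j)%N)) :> R.
Proof.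
elim: c g => [|c IHc] g g_unit; first by rewrite muln0 expr0 mul1r.
have lt_n : (n < c.+1 + n)%N by lia.
have g_n j : g n j = (j == 0%N)%:R by rewrite -[n]addn0 g_unit.
rewrite (expand_det_row _ (Ordinal lt_n)) (big_only1 ord0) //; last first.
  by move=> j nej _; rewrite mxE /= g_n (negPf (nej : j != 0%N :> nat)) mul0r.
rewrite mxE /= g_n eqxx mul1r /cofactor sqmx_minor /=.
rewrite IHc => [|r j lt_rc]; last first.
  by rewrite /bump leq_addr leq0n !add1n -addnS g_unit ?eqSS.
rewrite mulrA -exprD addn0 mulnS; congr (_ * \det _); apply: eq_sqmx => i j lt_in _.
by rewrite /bump (leqNgt n i) lt_in /= add1n addSn.
Qed.

Definition rev_perm k : 'S_k := perm (@rev_ord_inj k).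

Lemma det_sqmx_rev k f :
  \det (sqmx k (fun i j => f i (k.-1 - j)%N)) = (-1) ^+ rev_perm k * \det (sqmx k f) :> R.
Proof.
have -> : sqmx k (fun i j => f i (k.-1 - j)%N) = col_perm (rev_perm k) (sqmx k f).
  by apply/matrixP => i j; rewrite !mxE permE /=; congr (f _ _); lia.
by rewrite col_permE det_mulmx det_perm odd_permV mulrC.
Qed.

End ComRingMatrices.

Lemma is_trig_invmx (R : fieldType) n (A : 'M[R]_n) :
  A \in unitmx -> is_trig_mx A -> is_trig_mx (invmx A).
Proof.
move=> A_unit A_trig; have /is_trig_mxP A0 := A_trig; apply/is_trig_mxP.
have A_diag i : A i i != 0.
  move: A_unit; rewrite unitmxE unitfE det_trig // prodf_seq_neq0.
  by move/allP/(_ i (mem_index_enum i)).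
suff invA0 k (i j : 'I_n) : i = k :> nat -> (i < j)%N -> invmx A i j = 0.
  by move=> i j; apply: invA0.
elim/ltn_ind: k i j => k IHk i j ik lt_ij.
have := congr1 (fun B : 'M[R]_n => B i j) (mulmxV A_unit).
rewrite !mxE -val_eqE (ltn_eqF lt_ij) (bigD1 i) //= big1 ?addr0 => [/eqP|l nel].
  by rewrite mulf_eq0 (negPf (A_diag i)) => /eqP.
have [lt_li|lt_il|/val_inj eq_li] := ltngtP l i.
- by rewrite (IHk l _ l j) ?mulr0 ?(ltn_trans lt_li lt_ij) // -ik.
- by rewrite A0 ?mul0r.
- by rewrite eq_li eqxx in nel.
Qed.

(* [GB_fact], over an arbitrary field. *)
Definition gauss_borel (R : fieldType) n (M L U : 'M[R]_n) : Prop :=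
  [/\ (forall i j : 'I_n, (i < j)%N -> L i j = 0),
      (forall i : 'I_n, L i i = 1),
      (forall i j : 'I_n, (j < i)%N -> U i j = 0),
      U \in unitmx &
      M = invmx L *m invmx U].

Section GaussBorel.
Variables (R : fieldType) (N : nat) (M L U : 'M[R]_N).
Hypothesis MLU : gauss_borel M L U.

Lemma gb_L_trig : is_trig_mx L.
Proof. by case: MLU => L0 _ _ _ _; apply/is_trig_mxP. Qed.

Lemma gb_U_trig : is_trig_mx U^T.
Proof. by case: MLU => _ _ U0 _ _; apply/is_trig_mxP => i j lt_ij; rewrite mxE U0. Qed.

Lemma gb_L_diag i : (i < N)%N -> mxn 0 L i i = 1.
Proof. by case: MLU => _ L1 _ _ _ lt_iN; rewrite mxnE L1. Qed.

Lemma gb_L_unit : L \in unitmx.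
Proof.
case: MLU => _ L1 _ _ _; rewrite unitmxE det_trig ?gb_L_trig //.
by rewrite big1 ?unitr1.
Qed.

Lemma gb_Linv_trig : is_trig_mx (invmx L).
Proof. exact: is_trig_invmx gb_L_unit gb_L_trig. Qed.

Lemma gb_Uinv_trig : is_trig_mx (invmx U)^T.
Proof.
case: MLU => _ _ _ U_unit _.
by rewrite trmx_inv is_trig_invmx ?unitmx_tr ?gb_U_trig.
Qed.

Lemma gb_mulLM : L *m M = invmx U.
Proof. by case: MLU => _ _ _ _ ->; rewrite mulmxA mulmxV ?mul1mx ?gb_L_unit. Qed.

Lemma gb_mulMU : M *m U = invmx L.
Proof. by case: MLU => _ _ _ U_unit ->; rewrite -mulmxA mulVmx ?mulmx1. Qed.

Lemma gb_Uinv_diag i : (i < N)%N -> mxn 0 U i i * mxn 0 (invmx U) i i = 1.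
Proof.
case: MLU => _ _ _ U_unit _ lt_iN.
by rewrite -mxn_mul_diag_trig_tr ?gb_U_trig ?gb_Uinv_trig // mulmxV // mxn1 ?eqxx.
Qed.

Lemma gb_Uinv_diag_neq0 i : (i < N)%N -> mxn 0 (invmx U) i i != 0.
Proof.
by move=> /gb_Uinv_diag UV1; apply: contra_eq_neq UV1 => ->; rewrite mulr0 eq_sym oner_neq0.
Qed.

Lemma gb_prod_Uinv_diag_neq0 k : (k <= N)%N -> \prod_(i < k) mxn 0 (invmx U) i i != 0.
Proof.
move=> le_kN; rewrite prodf_seq_neq0; apply/allP => i _.
by rewrite gb_Uinv_diag_neq0 // (leq_trans (ltn_ord i)).
Qed.

Lemma gb_U_diag i : (i < N)%N -> mxn 0 U i i = (mxn 0 (invmx U) i i)^-1.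
Proof.
move=> lt_iN; apply: (mulIf (gb_Uinv_diag_neq0 lt_iN)).
by rewrite gb_Uinv_diag // mulVf // gb_Uinv_diag_neq0.
Qed.

Lemma gb_U_diag_neq0 i : (i < N)%N -> mxn 0 U i i != 0.
Proof. by move=> lt_iN; rewrite gb_U_diag // invr_eq0 gb_Uinv_diag_neq0. Qed.

Lemma gb_prod_U_diag_neq0 k : (k <= N)%N -> \prod_(i < k) mxn 0 U i i != 0.
Proof.
move=> le_kN; rewrite prodf_seq_neq0; apply/allP => i _.
by rewrite gb_U_diag_neq0 // (leq_trans (ltn_ord i)).
Qed.

Lemma gb_Linv_diag i : (i < N)%N -> mxn 0 (invmx L) i i = 1.
Proof.
move=> lt_iN; have := mxn_mul_diag_trig i gb_L_trig gb_Linv_trig.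
by rewrite mulmxV ?gb_L_unit // mxn1 // eqxx gb_L_diag // mul1r.
Qed.

Lemma gb_lead_minor k : (k <= N)%N ->
  \det (sqmx k (mxn 0 M)) = \prod_(i < k) mxn 0 (invmx U) i i.
Proof.
move=> le_kN.
have LM : sqmx k (mxn 0 L) *m sqmx k (mxn 0 M) = sqmx k (mxn 0 (invmx U)).
  rewrite sqmx_mul; apply: eq_sqmx => i j lt_ik _.
  by rewrite -gb_mulLM (mxn_mul_trig _ _ gb_L_trig (k := k)) ?lt_ik.
have := congr1 determinant LM; rewrite det_mulmx (det_sqmx_lower (f := mxn 0 L)); last first.
  by move=> i j /andP[lt_ij _]; apply: mxn_trig gb_L_trig lt_ij.
rewrite big1 ?mul1r => [->|i _]; last by rewrite gb_L_diag // (leq_trans (ltn_ord i)).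
by apply: det_sqmx_upper => i j /andP[lt_ji _]; apply: mxn_trig_tr gb_Uinv_trig lt_ji.
Qed.

Lemma gb_row_shift_minor n b : (n + b <= N)%N ->
  \det (sqmx n (fun i j => mxn 0 M (b + i) j)) =
  (-1) ^+ (n * b) * \det (sqmx b (fun i j => mxn 0 L (n + i) j)) *
  \prod_(i < n) mxn 0 (invmx U) i i.
Proof.
move=> le_nbN.
pose g i j := if (i < n)%N then (j == b + i)%N%:R else mxn 0 L i j.
pose h i j := if (i < n)%N then mxn 0 M (b + i) j else mxn 0 (invmx U) i j.
have GM : sqmx (n + b) g *m sqmx (n + b) (mxn 0 M) = sqmx (n + b) h.
  rewrite sqmx_mul; apply: eq_sqmx => i j lt_i _; rewrite /g /h; case: ifP => lt_in.
    have lt_bi : (b + i < n + b)%N by lia.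
    rewrite (big_only1 (Ordinal lt_bi)) //= ?eqxx ?mul1r // => l nel _.
    by rewrite (negPf (nel : l != b + i :> nat)) mul0r.
  by rewrite -gb_mulLM (mxn_mul_trig _ _ gb_L_trig (k := n + b)) ?lt_i.
have detG : \det (sqmx (n + b) g) =
    (-1) ^+ (n * b) * \det (sqmx b (fun i j => mxn 0 L (n + i) j)).
  rewrite det_sqmx_top_unit_rows => [|i j lt_in]; last by rewrite /g lt_in.
  by congr (_ * \det _); apply: eq_sqmx => i j _ _; rewrite /g ltnNge leq_addr.
have h_low i j : (j < n + i)%N -> h (n + i)%N j = 0.
  by move=> lt_j; rewrite /h ltnNge leq_addr (mxn_trig_tr gb_Uinv_trig).
have detH : \det (sqmx (n + b) h) = \det (sqmx n (fun i j => mxn 0 M (b + i) j)) *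
    \prod_(i < b) mxn 0 (invmx U) (n + i)%N (n + i)%N.
  rewrite det_sqmx_ublock => [|i j _ lt_jn]; last by rewrite h_low ?ltn_addr.
  congr (_ * _); first by congr (\det _); apply: eq_sqmx => i j lt_in _; rewrite /h lt_in.
  rewrite det_sqmx_upper => [|i j /andP[lt_ji _]]; last by rewrite h_low // ltn_add2l.
  by apply: eq_bigr => i _; rewrite /h ltnNge leq_addr.
have V_neq0 : \prod_(i < b) mxn 0 (invmx U) (n + i)%N (n + i)%N != 0.
  rewrite prodf_seq_neq0; apply/allP => i _; apply: gb_Uinv_diag_neq0.
  by have := ltn_ord i; lia.
have := congr1 determinant GM.
by rewrite det_mulmx detG detH gb_lead_minor // big_split_ord /= mulrA => /(mulIf V_neq0).
Qed.

Lemma gb_col_shift_minor n c : (n + c <= N)%N ->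
  \det (sqmx c (fun r k => mxn 0 U r (n + k))) =
  (-1) ^+ (n * c) * \det (sqmx n (fun i j => mxn 0 M i (c + j))) *
  \prod_(i < n + c) mxn 0 U i i.
Proof.
move=> le_ncN.
pose g i j := if (i < n)%N then mxn 0 M i j else (j == i - n)%N%:R.
pose h i j := if (i < n)%N then mxn 0 (invmx L) i j else mxn 0 U (i - n) j.
have GU : sqmx (n + c) g *m sqmx (n + c) (mxn 0 U) = sqmx (n + c) h.
  rewrite sqmx_mul; apply: eq_sqmx => i j lt_i lt_j; rewrite /g /h; case: ifP => lt_in.
    by rewrite -gb_mulMU (mxn_mul_trig_tr _ _ gb_U_trig (k := n + c)) ?lt_j.
  have lt_in_c : (i - n < n + c)%N by lia.
  rewrite (big_only1 (Ordinal lt_in_c)) //= ?eqxx ?mul1r // => l nel _.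
  by rewrite (negPf (nel : l != (i - n)%N :> nat)) mul0r.
have detG : \det (sqmx (n + c) g) =
    (-1) ^+ (n * c) * \det (sqmx n (fun i j => mxn 0 M i (c + j))).
  rewrite addnC det_sqmx_bottom_unit_rows => [|r j lt_rc]; last first.
    by rewrite /g ltnNge leq_addr addKn.
  by congr (_ * \det _); apply: eq_sqmx => i j lt_in _; rewrite /g lt_in.
have detH : \det (sqmx (n + c) h) = \det (sqmx c (fun r k => mxn 0 U r (n + k))).
  rewrite det_sqmx_lblock => [|i j lt_in _]; last first.
    by rewrite /h lt_in (mxn_trig gb_Linv_trig) ?ltn_addr.
  rewrite det_sqmx_lower => [|i j /andP[lt_ij lt_jn]]; last first.
    by rewrite /h (ltn_trans lt_ij lt_jn) (mxn_trig gb_Linv_trig).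
  rewrite big1 ?mul1r => [|i _]; last by rewrite /h ltn_ord gb_Linv_diag //; have := ltn_ord i; lia.
  by congr (\det _); apply: eq_sqmx => i j _ _; rewrite /h ltnNge leq_addr !addKn.
have := congr1 determinant GU; rewrite det_mulmx detG detH => <-.
rewrite (det_sqmx_upper (f := mxn 0 U)) // => i j /andP[lt_ji _].
exact: mxn_trig_tr gb_U_trig lt_ji.
Qed.

End GaussBorel.

Section TwoFactorizations.
Variables (R : fieldType) (N : nat) (M L U M' L' U' : 'M[R]_N).
Hypotheses (MLU : gauss_borel M L U) (MLU' : gauss_borel M' L' U').

Lemma gb_Uinv_mul_diag n : (n < N)%N ->
  mxn 0 (invmx U *m U') n n = mxn 0 (invmx U) n n / mxn 0 (invmx U') n n.
Proof.
move=> lt_nN.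
by rewrite mxn_mul_diag_trig_tr ?(gb_Uinv_trig MLU) ?(gb_U_trig MLU') ?(gb_U_diag MLU').
Qed.

Lemma gb_L_mul_Linv_subdiag n : (n.+1 < N)%N ->
  (forall l k, (l < N)%N -> (k <= n)%N -> mxn 0 M' l k = mxn 0 M l k.+1) ->
  mxn 0 (L *m invmx L') n.+1 n = mxn 0 (invmx U) n.+1 n.+1 / mxn 0 (invmx U') n n.
Proof.
move=> lt_n1N M'_shift.
have LM' k : (k <= n)%N -> mxn 0 (L *m M') n.+1 k = mxn 0 (invmx U) n.+1 k.+1.
  by move=> le_kn; rewrite -(gb_mulLM MLU) !mxn_mul; apply: eq_bigr => l _; rewrite M'_shift.
rewrite -(gb_mulMU MLU') mulmxA (mxn_mul_trig_tr _ _ (gb_U_trig MLU') (k := n.+1)); last first.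
  by rewrite ltnSn ltnW.
rewrite big_ord_recr /= big1 ?add0r => [|k _].
  by rewrite LM' // (gb_U_diag MLU') ?(ltnW lt_n1N).
by rewrite LM' ?(ltnW (ltn_ord k)) // (mxn_trig_tr (gb_Uinv_trig MLU)) ?mul0r // ltnS ltn_ord.
Qed.

End TwoFactorizations.

Section PolynomialMatrices.
Variable R : realType.

Definition xmono r k (j : 'I_r) : {poly R} := if j == (k %% r)%N :> nat then 'X^(k %/ r)%N else 0.

Lemma XmxE n r (k : 'I_n) j : Xmx R n r k j = xmono k j.
Proof. by rewrite mxE. Qed.

Lemma xmono_horner0 r k (j : 'I_r) : (xmono k j).[0] = (k == j)%:R.
Proof.
have r_gt0 : (0 < r)%N by apply: leq_ltn_trans (ltn_ord j).
rewrite /xmono; have [lt_kr|le_rk] := ltnP k r.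
  by rewrite modn_small // divn_small // expr0 eq_sym; case: eqP; rewrite ?hornerC ?horner0.
rewrite (gtn_eqF (leq_trans (ltn_ord j) le_rk)); case: eqP => _; rewrite ?horner0 //.
by rewrite hornerXn expr0n eqn0Ngt divn_gt0 // le_rk.
Qed.

(* With [frakX_pow]: row k of X_{[r]} times frakX_r^b is row b + k of X_{[r]}. *)
Lemma xmono_shift r k b (j c : 'I_r) : j = (k %% r)%N :> nat ->
  xmono k j * xmono (j + b) c = xmono (b + k) c.
Proof.
move=> jk; have r_gt0 : (0 < r)%N by apply: leq_ltn_trans (ltn_ord j).
have mod_bk : ((b + k) %% r = (j + b) %% r)%N by rewrite jk modnDml addnC.
have div_bk : ((b + k) %/ r = k %/ r + (j + b) %/ r)%N.
  by rewrite jk [in LHS](divn_eq k r) addnCA divnMDl // (addnC b).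
rewrite /xmono jk eqxx mod_bk div_bk -jk exprD.
by case: eqP; rewrite ?mulr0.
Qed.

Lemma frakX_pow r b (a a' : 'I_r) : mxpow (frakX R r) b a a' = xmono (a + b) a'.
Proof.
elim: b a a' => [|b IHb] a a'.
  rewrite /mxpow /= mxE /xmono addn0 modn_small ?divn_small // expr0.
  by rewrite -[a == a']/(a == a' :> nat) eq_sym; case: (_ == _).
rewrite [mxpow _ _]/mxpow iterS -/(mxpow _ b) mxE.
have [lt_a1r|le_ra1] := ltnP a.+1 r.
  rewrite (big_only1 (Ordinal lt_a1r)) ?mxE ?eqxx ?mul1r ?IHb ?addSnnS // => c nec _.
  by rewrite mxE (negPf (nec : c != a.+1 :> nat)) ifF ?mul0r //; apply/eqP; lia.
have r_gt0 : (0 < r)%N by apply: leq_ltn_trans (ltn_ord a).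
have a_last : a = r.-1 :> nat by have := ltn_ord a; lia.
have frakX_last c : frakX R r a c = if c == 0%N :> nat then 'X else 0.
  by rewrite mxE ifF ?a_last ?eqxx //; apply/eqP; have := ltn_ord c; lia.
rewrite (big_only1 (Ordinal r_gt0)) => [|//|c nec _]; last first.
  by rewrite frakX_last (negPf (nec : c != 0%N :> nat)) mul0r.
rewrite frakX_last /= IHb /xmono /= a_last -addSnnS prednK // modnDl.
by rewrite add0n divnDl ?dvdnn // divnn r_gt0 add1n exprS; case: ifP; rewrite ?mulr0.
Qed.

Lemma Bpoly_horner0 N q (L : 'M[R]_N) m j : (j < q)%N -> (j < N)%N ->
  (mxn 0 (Bpoly q L) m j).[0] = mxn 0 L m j.
Proof.
move=> lt_jq lt_jN; have [lt_mN|le_Nm] := ltnP m N; last first.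
  by rewrite !mxn_out ?horner0 // negb_and -leqNgt le_Nm.
rewrite !mxnE mxE horner_sum (big_only1 (Ordinal lt_jN)) // => [|k nek _].
  by rewrite XmxE mxE hornerCM xmono_horner0 eqxx mulr1.
by rewrite XmxE mxE hornerCM xmono_horner0 (negPf (nek : k != j :> nat)) mulr0.
Qed.

Lemma Apoly_horner0 N p (U : 'M[R]_N) i m : (i < p)%N -> (i < N)%N ->
  (mxn 0 (Apoly p U) i m).[0] = mxn 0 U i m.
Proof.
move=> lt_ip lt_iN; have [lt_mN|le_Nm] := ltnP m N; last first.
  by rewrite !mxn_out ?horner0 // negb_and -(leqNgt N m) le_Nm orbT.
rewrite !mxnE mxE horner_sum (big_only1 (Ordinal lt_iN)) // => [|k nek _].
  by rewrite [_^T _ _]mxE XmxE mxE hornerM hornerC xmono_horner0 eqxx mul1r.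
rewrite [_^T _ _]mxE XmxE mxE hornerM hornerC xmono_horner0.
by rewrite (negPf (nek : k != i :> nat)) mul0r.
Qed.

Lemma tauB_det N q (L : 'M[R]_N) b n : (b <= q)%N -> (b <= N)%N ->
  tauB q L b n = \det (sqmx b (fun i j => mxn 0 L (n + i) j)).
Proof.
move=> le_bq le_bN; congr (\det _); apply/matrixP => i j; rewrite !mxE.
by rewrite Bpoly_horner0 // (leq_trans (ltn_ord j)).
Qed.

Lemma tauA_det N p (U : 'M[R]_N) a n : (a <= p)%N -> (a <= N)%N ->
  tauA p U a n = (-1) ^+ rev_perm a * \det (sqmx a (fun r k => mxn 0 U r (n + k))).
Proof.
move=> le_ap le_aN; rewrite -det_sqmx_rev; congr (\det _); apply/matrixP => i k; rewrite !mxE.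
rewrite Apoly_horner0 ?(leq_trans (ltn_ord i)) //.
by congr (mxn _ _ _ _); have := ltn_ord k; lia.
Qed.

End PolynomialMatrices.

Arguments xmono {R r}.

Section ShiftedMoments.
Variables (R : realType) (p q : nat) (I : 'I_q -> 'I_p -> {poly R} -> R).
Hypotheses (I0 : forall a c, I a c 0 = 0) (p_gt0 : (0 < p)%N) (q_gt0 : (0 < q)%N).

Lemma mom_mxE (J : 'I_q -> 'I_p -> {poly R} -> R) N (k l : 'I_N) :
  mom_mx J N N k l = \sum_(a < q) \sum_(c < p) J a c (xmono k a * xmono l c).
Proof. by rewrite mxE; apply: eq_bigr => a _; apply: eq_bigr => c _; rewrite !XmxE. Qed.

Lemma Ishift_xmono b a i j :
  \sum_(x < q) \sum_(y < p) Ishift I b a x y (xmono i x * xmono j y) =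
  \sum_(x < q) \sum_(y < p) I x y (xmono (b + i) x * xmono (a + j) y).
Proof.
have xmono_off r k (x : 'I_r) : x != (k %% r)%N :> nat -> xmono k x = 0 :> {poly R}.
  by rewrite /xmono => /negPf ->.
pose x0 : 'I_q := Ordinal (ltn_pmod i q_gt0).
pose y0 : 'I_p := Ordinal (ltn_pmod j p_gt0).
rewrite (big_only1 x0) => [|//|x nex _]; last first.
  apply: big1 => y _; rewrite xmono_off // mul0r.
  by apply: big1 => c _; apply: big1 => d _; rewrite !mul0r I0.
rewrite (big_only1 y0) => [|//|y ney _]; last first.
  rewrite (xmono_off _ j y) // mulr0.
  by apply: big1 => c _; apply: big1 => d _; rewrite !mul0r I0.
apply: eq_bigr => c _; apply: eq_bigr => d _.
by rewrite !frakX_pow -mulrA mulrACA !xmono_shift.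
Qed.

Lemma mxn_mom_Ishift N b a i j : (b + i < N)%N -> (a + j < N)%N ->
  mxn 0 (mom_mx (Ishift I b a) N N) i j = mxn 0 (mom_mx I N N) (b + i) (a + j).
Proof.
move=> lt_biN lt_ajN.
have lt_iN : (i < N)%N by apply: leq_ltn_trans lt_biN; rewrite leq_addl.
have lt_jN : (j < N)%N by apply: leq_ltn_trans lt_ajN; rewrite leq_addl.
by rewrite (mxnE _ _ lt_iN lt_jN) (mxnE _ _ lt_biN lt_ajN) !mom_mxE Ishift_xmono.
Qed.

Lemma mom_mx_Ishift00 N : mom_mx (Ishift I 0 0) N N = mom_mx I N N.
Proof.
apply/matrixP => i j.
by rewrite -(mxn_ord 0 (mom_mx _ _ _)) mxn_mom_Ishift ?add0n ?mxn_ord ?ltn_ord.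
Qed.

End ShiftedMoments.

Section TauRecurrences.
Variables (R : realType) (p q N : nat) (I : 'I_q -> 'I_p -> {poly R} -> R).
Hypotheses (I0 : forall a c, I a c 0 = 0) (p_gt0 : (0 < p)%N) (q_gt0 : (0 < q)%N).
Variables (L0 U0 : 'M[R]_N).
Hypothesis MLU0 : gauss_borel (mom_mx I N N) L0 U0.

Lemma tauB_lead_minors c m Lc Uc : (c <= q)%N -> (m + c <= N)%N ->
  gauss_borel (mom_mx (Ishift I c 0) N N) Lc Uc ->
  tauB q L0 c m = (-1) ^+ (m * c) * \prod_(i < m) mxn 0 (invmx Uc) i i /
                  \prod_(i < m) mxn 0 (invmx U0) i i.
Proof.
move=> le_cq le_mcN MLUc.
have le_mN : (m <= N)%N by apply: leq_trans le_mcN; rewrite leq_addr.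
have shifted_minor : \det (sqmx m (fun i j => mxn 0 (mom_mx I N N) (c + i) j)) =
    \prod_(i < m) mxn 0 (invmx Uc) i i.
  rewrite -(gb_lead_minor MLUc le_mN); congr (\det _); apply: eq_sqmx => i j lt_im lt_jm.
  by rewrite mxn_mom_Ishift ?add0n //; lia.
rewrite (gb_row_shift_minor MLU0 le_mcN) in shifted_minor.
rewrite tauB_det ?(leq_trans (leq_addl m c) le_mcN) // -shifted_minor.
by rewrite -mulrA mulfK ?signrMK ?(gb_prod_Uinv_diag_neq0 MLU0).
Qed.

Lemma tauB_neq0 c m Lc Uc : (c <= q)%N -> (m + c <= N)%N ->
  gauss_borel (mom_mx (Ishift I c 0) N N) Lc Uc -> tauB q L0 c m != 0.
Proof.
move=> le_cq le_mcN MLUc; have le_mN : (m <= N)%N by apply: leq_trans le_mcN; rewrite leq_addr.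
by rewrite (tauB_lead_minors le_cq le_mcN MLUc) !mulf_neq0 ?signr_eq0 ?invr_eq0
  ?(gb_prod_Uinv_diag_neq0 MLUc le_mN) ?(gb_prod_Uinv_diag_neq0 MLU0 le_mN).
Qed.

Lemma tauB_succ c m Lc Uc : (c <= q)%N -> (m.+1 + c <= N)%N ->
  gauss_borel (mom_mx (Ishift I c 0) N N) Lc Uc ->
  tauB q L0 c m.+1 =
  (-1) ^+ c * (mxn 0 (invmx Uc) m m / mxn 0 (invmx U0) m m) * tauB q L0 c m.
Proof.
move=> le_cq le_m1cN MLUc; have le_mcN := ltnW le_m1cN.
have lt_mN : (m < N)%N by apply: leq_trans le_m1cN; rewrite leq_addr.
rewrite !(tauB_lead_minors le_cq _ MLUc) // !big_ord_recr /= mulSn exprD.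
have := gb_Uinv_diag_neq0 MLU0 lt_mN; have := gb_prod_Uinv_diag_neq0 MLU0 (ltnW lt_mN).
by move=> P0 v0; field; rewrite P0 v0.
Qed.

Lemma tauA_lead_minors c m Lc Uc : (c <= p)%N -> (m + c <= N)%N ->
  gauss_borel (mom_mx (Ishift I 0 c) N N) Lc Uc ->
  tauA p U0 c m = (-1) ^+ rev_perm c * ((-1) ^+ (m * c) *
    \prod_(i < m) mxn 0 (invmx Uc) i i * \prod_(i < m + c) mxn 0 U0 i i).
Proof.
move=> le_cp le_mcN MLUc.
have le_mN : (m <= N)%N by apply: leq_trans le_mcN; rewrite leq_addr.
have shifted_minor : \det (sqmx m (fun i j => mxn 0 (mom_mx I N N) i (c + j))) =
    \prod_(i < m) mxn 0 (invmx Uc) i i.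
  rewrite -(gb_lead_minor MLUc le_mN); congr (\det _); apply: eq_sqmx => i j lt_im lt_jm.
  by rewrite mxn_mom_Ishift ?add0n //; lia.
rewrite tauA_det ?(leq_trans (leq_addl m c) le_mcN) //.
by rewrite (gb_col_shift_minor MLU0) // shifted_minor.
Qed.

Lemma tauA_neq0 c m Lc Uc : (c <= p)%N -> (m + c <= N)%N ->
  gauss_borel (mom_mx (Ishift I 0 c) N N) Lc Uc -> tauA p U0 c m != 0.
Proof.
move=> le_cp le_mcN MLUc; have le_mN : (m <= N)%N by apply: leq_trans le_mcN; rewrite leq_addr.
by rewrite (tauA_lead_minors le_cp le_mcN MLUc) !mulf_neq0 ?signr_eq0
  ?(gb_prod_Uinv_diag_neq0 MLUc le_mN) ?(gb_prod_U_diag_neq0 MLU0 le_mcN).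
Qed.

Lemma tauA_succ c m Lc Uc : (c <= p)%N -> (m.+1 + c <= N)%N ->
  gauss_borel (mom_mx (Ishift I 0 c) N N) Lc Uc ->
  tauA p U0 c m.+1 =
  (-1) ^+ c * (mxn 0 (invmx Uc) m m * mxn 0 U0 (m + c)%N (m + c)%N) * tauA p U0 c m.
Proof.
move=> le_cp le_m1cN MLUc; have le_mcN := ltnW le_m1cN.
rewrite !(tauA_lead_minors le_cp _ MLUc) // addSn !big_ord_recr /= mulSn exprD.
by move: ((-1) ^+ rev_perm c) => rev_sign; ring.
Qed.

Lemma Ufactor_diag_tauB b n Lb Ub Lb' Ub' : (b < q)%N -> (n + b.+1 < N)%N ->
  gauss_borel (mom_mx (Ishift I b 0) N N) Lb Ub ->
  gauss_borel (mom_mx (Ishift I b.+1 0) N N) Lb' Ub' ->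
  mxn 0 (invmx Ub' *m Ub) n n =
  - (tauB q L0 b n * tauB q L0 b.+1 n.+1) / (tauB q L0 b n.+1 * tauB q L0 b.+1 n).
Proof.
move=> lt_bq lt_nbN MLUb MLUb'; have le_bq := ltnW lt_bq.
have [lt_nN le_n1bN le_nbN] : [/\ n < N, n.+1 + b <= N & n + b <= N]%N by split; lia.
rewrite (gb_Uinv_mul_diag MLUb' MLUb lt_nN).
rewrite (tauB_succ lt_bq lt_nbN MLUb') (tauB_succ le_bq le_n1bN MLUb) exprS.
have := tauB_neq0 le_bq le_nbN MLUb; have := tauB_neq0 lt_bq (ltnW lt_nbN) MLUb'.
have := gb_Uinv_diag_neq0 MLUb lt_nN; have := gb_Uinv_diag_neq0 MLU0 lt_nN.
by move=> v0 vb tb' tb; field; rewrite v0 vb tb tb' signr_eq0.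
Qed.

Lemma Lfactor_subdiag_tauA a n La Ua La' Ua' : (a < p)%N -> (n + a.+1 < N)%N ->
  gauss_borel (mom_mx (Ishift I 0 a) N N) La Ua ->
  gauss_borel (mom_mx (Ishift I 0 a.+1) N N) La' Ua' ->
  mxn 0 (La *m invmx La') n.+1 n =
  - (tauA p U0 a n.+2 * tauA p U0 a.+1 n) / (tauA p U0 a n.+1 * tauA p U0 a.+1 n.+1).
Proof.
move=> lt_ap lt_naN MLUa MLUa'; have le_ap := ltnW lt_ap.
have [lt_n1N le_n2aN le_n1aN] : [/\ n.+1 < N, n.+2 + a <= N & n.+1 + a <= N]%N by split; lia.
have shift_col l k : (l < N)%N -> (k <= n)%N ->
    mxn 0 (mom_mx (Ishift I 0 a.+1) N N) l k = mxn 0 (mom_mx (Ishift I 0 a) N N) l k.+1.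
  by move=> lt_lN le_kn; rewrite !mxn_mom_Ishift ?addSnnS //; lia.
rewrite (gb_L_mul_Linv_subdiag MLUa MLUa' lt_n1N shift_col).
rewrite (tauA_succ le_ap le_n2aN MLUa) (tauA_succ lt_ap lt_naN MLUa') addSnnS exprS.
have := tauA_neq0 le_ap le_n1aN MLUa; have := tauA_neq0 lt_ap (ltnW lt_naN) MLUa'.
have := gb_Uinv_diag_neq0 MLUa' (ltnW lt_n1N); have := gb_U_diag_neq0 MLU0 lt_naN.
by move=> u va' ta' ta; field; rewrite u va' ta ta' signr_eq0.
Qed.

End TauRecurrences.

Lemma Ipoly0 (R : realType) p q (mu_pos mu_neg : 'I_q -> 'I_p -> {measure set R -> \bar R}) a c :
  Ipoly mu_pos mu_neg a c 0 = 0.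
Proof.
rewrite /Ipoly (_ : (fun x : R => 0.[x]) = fun _ => 0); last by apply: funext => x; rewrite horner0.
by rewrite !Rintegral_cst // !mul0r subrr.
Qed.

Theorem mainTheorem2 (R : realType) (p q N : nat)
  (mu_pos mu_neg : 'I_q -> 'I_p -> {measure set R -> \bar R}) :
  (0 < p)%N -> (0 < q)%N -> (0 < N)%N ->
  finite_moments mu_pos mu_neg ->
  forall (LN UN : 'M[R]_N) (LB UB LA UA : nat -> 'M[R]_N),
  GB_fact (mom_mx (Ipoly mu_pos mu_neg) N N) LN UN ->
  (forall b : nat, (1 <= b <= q)%N ->
     GB_fact (mom_mx (Ishift (Ipoly mu_pos mu_neg) b 0) N N) (LB b) (UB b)) ->
  (forall a : nat, (1 <= a <= p)%N ->
     GB_fact (mom_mx (Ishift (Ipoly mu_pos mu_neg) 0 a) N N) (LA a) (UA a)) ->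
  let Uf := fun b : nat => if b is 0 then UN else UB b in
  let Lf := fun a : nat => if a is 0 then LN else LA a in
  (forall b n : nat, (1 <= b <= q)%N -> (n + b < N)%N ->
     mxn 0 (invmx (Uf b) *m Uf b.-1) n n =
     - (tauB q LN b.-1 n * tauB q LN b n.+1) / (tauB q LN b.-1 n.+1 * tauB q LN b n)) /\
  (forall a n : nat, (1 <= a <= p)%N -> (n + a < N)%N ->
     mxn 0 (Lf a.-1 *m invmx (Lf a)) n.+1 n =
     - (tauA p UN a.-1 n.+2 * tauA p UN a n) / (tauA p UN a.-1 n.+1 * tauA p UN a n.+1)).
Proof.
move=> p_gt0 q_gt0 _ _ LN UN LB UB LA UA MLU MLUB MLUA Uf Lf.
set I := Ipoly mu_pos mu_neg in MLU MLUB MLUA *.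
have I0 : forall a c, I a c 0 = 0 by exact: Ipoly0.
have MLU00 : gauss_borel (mom_mx (Ishift I 0 0) N N) LN UN by rewrite mom_mx_Ishift00.
pose Lr b := if b is 0 then LN else LB b.
have MLUr b : (b <= q)%N -> gauss_borel (mom_mx (Ishift I b 0) N N) (Lr b) (Uf b).
  by case: b => [//|b] le_bq; apply: MLUB.
pose Uc a := if a is 0 then UN else UA a.
have MLUc a : (a <= p)%N -> gauss_borel (mom_mx (Ishift I 0 a) N N) (Lf a) (Uc a).
  by case: a => [//|a] le_ap; apply: MLUA.
split=> [[|b] n // /andP[_ lt_bq] lt_nbN | [|a] n // /andP[_ lt_ap] lt_naN].
  exact (Ufactor_diag_tauB I0 p_gt0 q_gt0 MLU lt_bq lt_nbN
    (MLUr b (ltnW lt_bq)) (MLUr b.+1 lt_bq)).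
exact (Lfactor_subdiag_tauA I0 p_gt0 q_gt0 MLU lt_ap lt_naN
  (MLUc a (ltnW lt_ap)) (MLUc a.+1 lt_ap)).
Qed.
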